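(* Let $A$ and $B$ be C$^*$-algebras, where $A$ is unital, simple and infinite. Let $T:A\to B$ be a linear map. Then $T$ is a $^*$-homomorphism if and only if $T$ is a $^*$-homomorphism at the unit $1$ of $A$.
   Context: A map $T:A\to B$ between C$^*$-algebras is a $^*$-homomorphism at $z\in A$ if for all $a,b\in A$ with $ab^*=z$ one has $T(ab^* )=T(a)T(b)^*=T(z)$, and for all $c,d\in A$ with $c^*d=z$ one has $T(c^*d)=T(c)^*T(d)=T(z)$. A unital C$^*$-algebra is infinite if its unit is not a finite projection (equivalently, it contains a projection that is Murray–von Neumann equivalent to a proper subprojection of itself). Simple means $A$ has no nontrivial norm-closed two-sided ideals. *)

From HB Require Import structures.
From mathcomp Require Import all_boot all_order all_algebra.
From mathcomp Require Import complex.
From mathcomp Require Import all_classical all_reals topology normedtype.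
Set Implicit Arguments. Unset Strict Implicit. Unset Printing Implicit Defensive.
Import Order.TTheory GRing.Theory Num.Theory.
Import numFieldNormedType.Exports.
Local Open Scope ring_scope.
Local Open Scope classical_set_scope.

Section CStar.
Variable R : realType.
Local Notation C := (complex R).

Definition is_cstar_algebra (V : completeNormedModType C)
    (mul : V -> V -> V) (star : V -> V) : Prop :=
  (forall x y z, mul x (mul y z) = mul (mul x y) z) /\
      (forall (a : C) x y z, mul (a *: x + y) z = a *: mul x z + mul y z) /\
      (forall (a : C) x y z, mul z (a *: x + y) = a *: mul z x + mul z y) /\
      (forall (a : C) x y, star (a *: x + y) = (Num.conj a) *: star x + star y) /\
      (forall x, star (star x) = x) /\
      (forall x y, star (mul x y) = mul (star y) (star x)) /\
      (forall x y, `|mul x y| <= `|x| * `|y|) /\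
      (forall x, `|mul (star x) x| = `|x| ^+ 2).

Variable V : completeNormedModType C.
Variables (mul : V -> V -> V) (star : V -> V).

Definition is_unit (one : V) : Prop := forall x, mul one x = x /\ mul x one = x.

Definition closed_ideal (I : set V) : Prop :=
  [/\ I 0,
      (forall x y, I x -> I y -> I (x + y)),
      (forall (a : C) x, I x -> I (a *: x)),
      (forall x y, I y -> I (mul x y) /\ I (mul y x))
    & closed I].

Definition simple_alg : Prop :=
  forall I : set V, closed_ideal I -> I = [set 0] \/ I = setT.

Definition projection (p : V) : Prop := mul p p = p /\ star p = p.

Definition mvn_equiv (p q : V) : Prop :=
  exists v, mul (star v) v = p /\ mul v (star v) = q.

Definition subproj (q p : V) : Prop := mul q p = q.

Definition finite_proj (p : V) : Prop :=
  forall q, projection q -> subproj q p -> mvn_equiv p q -> q = p.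

Definition infinite_alg (one : V) : Prop := ~ finite_proj one.

End CStar.

Section Hom.
Variable R : realType.
Local Notation C := (complex R).
Variables (VA VB : completeNormedModType C).
Variables (mulA : VA -> VA -> VA) (starA : VA -> VA).
Variables (mulB : VB -> VB -> VB) (starB : VB -> VB).

Definition is_linear_map (T : VA -> VB) : Prop :=
  forall (a : C) x y, T (a *: x + y) = a *: T x + T y.

Definition star_hom (T : VA -> VB) : Prop :=
  is_linear_map T /\
  (forall x y, T (mulA x y) = mulB (T x) (T y)) /\
  (forall x, T (starA x) = starB (T x)).

Definition star_hom_at (T : VA -> VB) (z : VA) : Prop :=
  (forall a b, mulA a (starA b) = z ->
     T (mulA a (starA b)) = mulB (T a) (starB (T b)) /\
     mulB (T a) (starB (T b)) = T z) /\
  (forall c d, mulA (starA c) d = z ->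
     T (mulA (starA c) d) = mulB (starB (T c)) (T d) /\
     mulB (starB (T c)) (T d) = T z).
End Hom.

(* If T is a *-homomorphism at 1, put S x := (T x^* )^*.  The biadditive maps
   (a, b) |-> T a S b and (a, b) |-> S a T b are then constant on the pairs with
   a b = 1.  In a unital Banach algebra every element is a difference of two
   invertible elements (Neumann series), and a simple infinite unital
   C*-algebra contains s, t with s^* s = t^* t = 1 and s^* t = 0: the ideal
   generated by the defect 1 - v v^* of a non-unitary isometry v is everything.
   These two facts force such a map to depend only on the product a b.  Hence
   p = T 1 is a projection commuting with the range of T, a |-> T a p is a
   *-homomorphism, and the C*-identity gives T a = T a p. *)

From HB Require Import structures.
From mathcomp Require Import all_boot all_order all_algebra.
From mathcomp Require Import complex.
From mathcomp Require Import all_classical all_reals topology normedtype sequences.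

Set Implicit Arguments.
Unset Strict Implicit.
Unset Printing Implicit Defensive.

Import Order.TTheory GRing.Theory Num.Theory.
Import numFieldNormedType.Exports.
Local Open Scope ring_scope.
Local Open Scope classical_set_scope.

Section ZmodMorphism.
Variables (U V : zmodType) (f : U -> V).
Hypothesis f_additive : zmod_morphism f.

Lemma zmod_morphism0 : f 0 = 0.
Proof. by rewrite -(subrr 0) f_additive subrr. Qed.

Lemma zmod_morphismN : {morph f : x / - x}.
Proof. by move=> x; rewrite -sub0r f_additive zmod_morphism0 sub0r. Qed.

Lemma zmod_morphismD : {morph f : x y / x + y}.
Proof. by move=> x y; rewrite -{1}[y]opprK f_additive zmod_morphismN opprK. Qed.

End ZmodMorphism.

Section Semilinear.
Variables (K : pzRingType) (U V : lmodType K) (sigma : K -> K) (f : U -> V).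
Hypothesis sigma1 : sigma 1 = 1.
Hypothesis f_semilinear : forall a x y, f (a *: x + y) = sigma a *: f x + f y.

Lemma semilinearD : {morph f : x y / x + y}.
Proof. by move=> x y; rewrite -{1}[x]scale1r f_semilinear sigma1 scale1r. Qed.

Lemma semilinear0 : f 0 = 0.
Proof. by apply: (addrI (f 0)); rewrite -semilinearD !addr0. Qed.

Lemma semilinear_zmod_morphism : zmod_morphism f.
Proof. by move=> x y; rewrite -[in f x](subrK y x) (semilinearD (x - y)) addrK. Qed.

Lemma semilinearZ a x : f (a *: x) = sigma a *: f x.
Proof. by rewrite -[a *: x]addr0 f_semilinear semilinear0 addr0. Qed.

End Semilinear.

Lemma linear_zmod_morphism (K : pzRingType) (U V : lmodType K) (f : U -> V) :
  (forall a x y, f (a *: x + y) = a *: f x + f y) -> zmod_morphism f.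
Proof. exact: (semilinear_zmod_morphism (sigma := id) erefl). Qed.

Lemma lmod_two_torsionfree (K : numFieldType) (V : lmodType K) (v : V) :
  v + v = 0 -> v = 0.
Proof.
move=> vv0; have /eqP : (2%:R : K) *: v = 0 by rewrite scaler_nat mulr2n.
by rewrite scaler_eq0 pnatr_eq0 => /eqP.
Qed.

(** * The defect ideal of a ring *)

Section UnitalRing.
Variable A : pzRingType.

Definition invertible (g : A) := exists g', g * g' = 1 /\ g' * g = 1.

Definition orthogonal_isometries (s s' t t' : A) :=
  [/\ s' * s = 1, t' * t = 1, s' * t = 0 & t' * s = 0].

Definition defect (w w' : A) := 1 - w * w'.

Definition defect_ideal : set A :=
  [set y | exists w w' x z, w' * w = 1 /\ y = x * defect w w' * z].

Section Isometry.
Variables w w' : A.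
Hypothesis w'w : w' * w = 1.

Lemma defect_mul_isometry : defect w w' * w = 0.
Proof. by rewrite mulrBl mul1r -mulrA w'w mulr1 subrr. Qed.

Lemma coisometry_mul_defect : w' * defect w w' = 0.
Proof. by rewrite mulrBr mulr1 mulrA w'w mul1r subrr. Qed.

Lemma defect_idem : defect w w' * defect w w' = defect w w'.
Proof. by rewrite {1}/defect mulrBl mul1r -mulrA coisometry_mul_defect mulr0 subr0. Qed.

End Isometry.

Lemma defect_ideal_defect w w' : w' * w = 1 -> defect_ideal (defect w w').
Proof. by move=> ww'; exists w, w', 1, 1; rewrite mul1r mulr1. Qed.

Lemma defect_ideal0 : defect_ideal 0.
Proof. by exists 1, 1, 0, 0; split; rewrite ?mulr1 ?mul0r. Qed.

Lemma defect_idealMl c y : defect_ideal y -> defect_ideal (c * y).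
Proof.
by move=> [w [w' [x [z [ww' ->]]]]]; exists w, w', (c * x), z; rewrite !mulrA.
Qed.

Lemma defect_idealMr c y : defect_ideal y -> defect_ideal (y * c).
Proof.
by move=> [w [w' [x [z [ww' ->]]]]]; exists w, w', x, (z * c); rewrite !mulrA.
Qed.

(* With E_i = defect w_i w_i', the defect of w_1 w_2 is E_1 + w_1 E_2 w_1', which
   lets x_1 E_1 z_1 + x_2 E_2 z_2 be written through a single defect. *)
Lemma defect_idealD y1 y2 : defect_ideal y1 -> defect_ideal y2 ->
  defect_ideal (y1 + y2).
Proof.
move=> [w1 [w1' [x1 [z1 [iso1 ->]]]]] [w2 [w2' [x2 [z2 [iso2 ->]]]]].
have iso : (w2' * w1') * (w1 * w2) = 1.
  by rewrite mulrA -(mulrA w2') iso1 mulr1 iso2.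
set E1 := defect w1 w1'; set E2 := defect w2 w2'.
have defectM : defect (w1 * w2) (w2' * w1') = E1 + w1 * E2 * w1'.
  by rewrite /E1 /E2 /defect mulrBr mulr1 mulrBl addrA subrK !mulrA.
have E1w1 : E1 * w1 = 0 := defect_mul_isometry iso1.
have w1E1 : w1' * E1 = 0 := coisometry_mul_defect iso1.
have E1E1 u : u * E1 * E1 = u * E1 by rewrite -mulrA defect_idem.
have E2E2 u : u * E2 * E2 = u * E2 by rewrite -mulrA defect_idem.
clearbody E1 E2.
exists (w1 * w2), (w2' * w1'), (x1 * E1 + x2 * E2 * w1'), (E1 * z1 + w1 * E2 * z2).
split => //; rewrite defectM !(mulrDl, mulrDr) !mulrA.
rewrite -!(mulrA _ E1 w1) -!(mulrA _ w1' E1) -!(mulrA _ w1' w1) E1w1 w1E1 iso1.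
by rewrite !(mulr0, mul0r, mulr1, addr0, add0r) !E1E1 !E2E2.
Qed.

Lemma orthogonal_isometries_of_defect_ideal1 : defect_ideal 1 ->
  exists s s' t t', orthogonal_isometries s s' t t'.
Proof.
move=> [w [w' [x [z [iso one_eq]]]]].
set E := defect w w' in one_eq.
exists w, w', (E * z), (x * E); split => //.
- by rewrite -mulrA (mulrA E) defect_idem // mulrA.
- by rewrite mulrA coisometry_mul_defect // mul0r.
- by rewrite -mulrA defect_mul_isometry // mulr0.
Qed.

End UnitalRing.

(** * Biadditive maps that are constant on inverse pairs *)

Section InversePairs.
Variables (A : pzRingType) (W : zmodType) (phi : A -> A -> W) (e : W).
Hypothesis phil_additive : forall b, zmod_morphism (phi^~ b).
Hypothesis phir_additive : forall a, zmod_morphism (phi a).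
Hypothesis phi_inverse : forall x y, x * y = 1 -> phi x y = e.
Hypothesis W_two_torsionfree : forall w : W, w + w = 0 -> w = 0.

Let phiDl a b c : phi (a + b) c = phi a c + phi b c :=
  zmod_morphismD (phil_additive c) a b.
Let phiDr a b c : phi a (b + c) = phi a b + phi a c :=
  zmod_morphismD (phir_additive a) b c.
Let phiNl a b : phi (- a) b = - phi a b := zmod_morphismN (phil_additive b) a.
Let phiNr a b : phi a (- b) = - phi a b := zmod_morphismN (phir_additive a) b.

Lemma pairing_eq0l x y u : x * y = 1 -> u * y = 0 -> phi u y = 0.
Proof.
move=> xy uy; apply: (addrI e); rewrite addr0 -{1}(phi_inverse xy) -phiDl.
by rewrite phi_inverse // mulrDl xy uy addr0.
Qed.

Lemma pairing_eq0r x y v : x * y = 1 -> x * v = 0 -> phi x v = 0.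
Proof.
move=> xy xv; apply: (addrI e); rewrite addr0 -{1}(phi_inverse xy) -phiDr.
by rewrite phi_inverse // mulrDr xy xv addr0.
Qed.

(* Both [(x + X, y + Y + Z)] and [(x - X, y - Y + Z)] are inverse pairs; they
   give [phi X Y + phi x Z + phi X Z = 0] and [phi X Y + phi x Z - phi X Z = 0]. *)
Lemma pairing_perturb x y X Y Z :
  x * y = 1 -> X * y = 0 -> x * Y = 0 -> X * Y + x * Z = 0 -> X * Z = 0 ->
  phi X Y + phi x Z = 0.
Proof.
move=> xy Xy xY XYxZ XZ.
have Xy' : (- X) * y = 0 by rewrite mulNr Xy oppr0.
have xY' : x * (- Y) = 0 by rewrite mulrN xY oppr0.
have expand u v : u * y = 0 -> x * v = 0 -> (x + u) * (y + v + Z) = 1 ->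
    phi u v + phi x Z + phi u Z = 0.
  move=> uy xv /phi_inverse; rewrite !(phiDl, phiDr) (phi_inverse xy).
  rewrite (pairing_eq0l xy uy) (pairing_eq0r xy xv) add0r addr0.
  move=> sum_e; apply: (addrI e); rewrite addr0 -[RHS]sum_e.
  by rewrite addrA (addrC (phi u v)) -!addrA.
have := expand X Y Xy xY.
have := expand (- X) (- Y) Xy' xY'.
rewrite !phiNl phiNr opprK.
have -> : (x - X) * (y - Y + Z) = 1.
  rewrite !(mulrDl, mulrDr) !(mulNr, mulrN) xy Xy xY XZ opprK !oppr0 !addr0.
  by rewrite add0r -addrA (addrC (x * Z)) XYxZ addr0.
have -> : (x + X) * (y + Y + Z) = 1.
  rewrite !(mulrDl, mulrDr) xy Xy xY XZ !addr0.
  by rewrite add0r -addrA (addrC (x * Z)) XYxZ addr0.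
move=> /(_ erefl) minus /(_ erefl) plus; apply: W_two_torsionfree.
by rewrite -[RHS](addr0 0) -{1}plus -minus [RHS]addrACA subrr addr0.
Qed.

Lemma pairing_orthogonal x y X Y : x * y = 1 -> X * y = 0 -> x * Y = 0 ->
  phi X Y = phi x (y * (X * Y)).
Proof.
move=> xy Xy xY; apply/eqP; rewrite -subr_eq0 -phiNr; apply/eqP.
apply: (pairing_perturb (y := y)) => //.
- by rewrite mulrN mulrA xy mul1r subrr.
- by rewrite mulrN mulrA Xy mul0r oppr0.
Qed.

Hypothesis diff_invertible :
  forall a : A, exists g c, [/\ invertible g, invertible c & a = g - c].

Lemma pairing_ann_r x y z b : x * y = 1 -> z * y = 0 -> phi z (y * b) = 0.
Proof.
move=> xy zy.
have ann g : invertible g -> phi z (y * g) = 0.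
  move=> [g' [_ g'g]]; apply: (@pairing_eq0l (g' * x)).
    by rewrite mulrA -(mulrA g') xy mulr1.
  by rewrite mulrA zy mul0r.
have [g [c [/ann phi_g /ann phi_c ->]]] := diff_invertible b.
by rewrite mulrBr phir_additive phi_g phi_c subrr.
Qed.

Lemma pairing_ann_l x y z c : x * y = 1 -> x * z = 0 -> phi (c * x) z = 0.
Proof.
move=> xy xz.
have ann g : invertible g -> phi (g * x) z = 0.
  move=> [g' [gg' _]]; apply: (@pairing_eq0r _ (y * g')).
    by rewrite mulrA -(mulrA g) xy mulr1.
  by rewrite -mulrA xz mulr0.
have [g [d [/ann phi_g /ann phi_d ->]]] := diff_invertible c.
by rewrite mulrBl phil_additive phi_g phi_d subrr.
Qed.

Section OrthogonalIsometries.
Variables s s' t t' : A.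
Hypotheses (s's : s' * s = 1) (t't : t' * t = 1) (s't : s' * t = 0) (t's : t' * s = 0).

Let P c := phi s' (s * c).

Lemma pairing_isometry_s c d : phi (c * s') (s * d) = P (c * d).
Proof.
have cs't : c * s' * t = 0 by rewrite -mulrA s't mulr0.
have t'sd : t' * (s * d) = 0 by rewrite mulrA t's mul0r.
have s'tcd : s' * (t * (c * d)) = 0 by rewrite mulrA s't mul0r.
have cs'sd : c * s' * (s * d) = c * d by rewrite mulrA -(mulrA c) s's mulr1.
rewrite (pairing_orthogonal t't cs't t'sd) cs'sd.
by rewrite (pairing_orthogonal s's t's s'tcd) (mulrA t') t't mul1r.
Qed.

Lemma pairing_isometry c w : phi (c * s') w = P (c * (s' * w)).
Proof.
have s'w : s' * (w - s * (s' * w)) = 0 by rewrite mulrBr mulrA s's mul1r subrr.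
have := pairing_ann_l c s's s'w.
by rewrite phir_additive pairing_isometry_s => /subr0_eq.
Qed.

Lemma pairing_factor a b : phi a b = P (a * b).
Proof.
set E := defect s s'.
have aE_s : a * E * s = 0 by rewrite -mulrA defect_mul_isometry // mulr0.
have s'_Eb : s' * (E * b) = 0 by rewrite mulrA coisometry_mul_defect // mul0r.
have split_one : s * s' + E = 1 by rewrite addrC subrK.
have split_b : b = s * (s' * b) + E * b by rewrite mulrA -mulrDl split_one mul1r.
rewrite -{1}[a]mulr1 -split_one mulrDr phiDl mulrA pairing_isometry.
rewrite [in phi (a * E) _]split_b phiDr (pairing_ann_r _ s's aE_s).
rewrite add0r (pairing_orthogonal s's aE_s s'_Eb) -phiDr -mulrDr.
by rewrite -!mulrA (mulrA E) defect_idem // -mulrDr -split_b.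
Qed.

End OrthogonalIsometries.

Lemma pairing_mul1 (s s' t t' a b : A) : orthogonal_isometries s s' t t' ->
  phi a b = phi 1 (a * b) /\ phi a b = phi (a * b) 1.
Proof.
move=> [s's t't s't t's]; have factor := pairing_factor s's t't s't t's.
by rewrite (factor a) (factor 1) (factor (a * b)) mul1r mulr1.
Qed.

End InversePairs.

(** * *-homomorphisms at the unit *)

Section StarHomAtOne.
Variables (A : pzRingType) (W : zmodType).
Variables (starA : A -> A) (mulB : W -> W -> W) (starB : W -> W) (T : A -> W).
Local Notation "x • y" := (mulB x y) (at level 40, left associativity).

Hypotheses (starA_additive : zmod_morphism starA) (starAK : involutive starA)
  (starAM : forall x y, starA (x * y) = starA y * starA x).
Hypotheses (mulBA : associative mulB)
  (mulBl_additive : forall y, zmod_morphism (mulB^~ y))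
  (mulBr_additive : forall x, zmod_morphism (mulB x)).
Hypotheses (starB_additive : zmod_morphism starB) (starBK : involutive starB)
  (starBM : forall x y, starB (x • y) = starB y • starB x).
Hypothesis starB_faithful : forall x, x • starB x = 0 -> x = 0.
Hypothesis W_two_torsionfree : forall w : W, w + w = 0 -> w = 0.
Hypothesis diff_invertible :
  forall a : A, exists g c, [/\ invertible g, invertible c & a = g - c].
Variables s s' t t' : A.
Hypothesis orth : orthogonal_isometries s s' t t'.
Hypothesis T_additive : zmod_morphism T.
Hypothesis T_at1_l : forall a b, a * starA b = 1 -> T a • starB (T b) = T 1.
Hypothesis T_at1_r : forall c d, starA c * d = 1 -> starB (T c) • T d = T 1.

Let S x := starB (T (starA x)).
Let p := T 1.

Let S_additive : zmod_morphism S.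
Proof. by move=> x y; rewrite /S starA_additive T_additive starB_additive. Qed.

Let S_star a : S (starA a) = starB (T a).
Proof. by rewrite /S starAK. Qed.

Let pairing (F G : A -> W) : zmod_morphism F -> zmod_morphism G ->
    (forall x y, x * y = 1 -> F x • G y = p) ->
  forall a b, F a • G b = F 1 • G (a * b) /\ F a • G b = F (a * b) • G 1.
Proof.
move=> F_add G_add FG_inverse a b.
have Fl b' : zmod_morphism (fun a' => F a' • G b').
  by move=> x y; rewrite F_add mulBl_additive.
have Gr a' : zmod_morphism (fun b' => F a' • G b').
  by move=> x y; rewrite G_add mulBr_additive.
exact: (pairing_mul1 Fl Gr FG_inverse W_two_torsionfree diff_invertible a b orth).
Qed.

Let TS a b : T a • S b = p • S (a * b) /\ T a • S b = T (a * b) • S 1.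
Proof.
by apply: pairing => // x y xy; apply: T_at1_l; rewrite starAK.
Qed.

Let ST a b : S a • T b = S 1 • T (a * b) /\ S a • T b = S (a * b) • p.
Proof.
by apply: pairing => // x y xy; apply: T_at1_r; rewrite starAK.
Qed.

Let starA1 : starA 1 = 1.
Proof. by rewrite -[starA 1]mulr1 -{2}(starAK 1) -starAM mulr1 starAK. Qed.

Let p_pstar : p • starB p = p.
Proof. by apply: T_at1_l; rewrite starA1 mulr1. Qed.

Let star_p : starB p = p.
Proof. by rewrite -{1}p_pstar starBM starBK p_pstar. Qed.

Let S1 : S 1 = p.
Proof. by rewrite /S starA1 star_p. Qed.

Let p_idem : p • p = p.
Proof. by rewrite -{2}star_p p_pstar. Qed.

Let Tp_pS a : T a • p = p • S a.
Proof. by rewrite -{1}S1 (TS a 1).1 mulr1. Qed.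

Let Sp_pT a : S a • p = p • T a.
Proof. by rewrite (ST a 1).1 mulr1 S1. Qed.

Let TS_mul a b : T a • S b = T (a * b) • p.
Proof. by rewrite (TS a b).2 S1. Qed.

Let Tp_mul a b : T (a * b) • p = T a • p • T b.
Proof. by rewrite -mulBA -Sp_pT mulBA TS_mul -mulBA p_idem. Qed.

Let Tp_comm a : T a • p = p • T a.
Proof. by rewrite -{1}[a]mul1r Tp_mul p_idem. Qed.

Let TpM a b : T (a * b) • p = (T a • p) • (T b • p).
Proof. by rewrite [T b • p]Tp_comm mulBA -(mulBA _ p p) p_idem -Tp_mul. Qed.

Let star_Tp a : starB (T a • p) = T (starA a) • p.
Proof. by rewrite starBM star_p -S_star Tp_pS. Qed.

(* The C*-identity enters here: [x := T a - T a • p] satisfies [x • x^* = 0]. *)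
Let Tp a : T a • p = T a.
Proof.
have : (T a - T a • p) • starB (T a - T a • p) = 0.
  rewrite starB_additive star_Tp -S_star mulBl_additive !mulBr_additive.
  rewrite TS_mul TpM [T (starA a) • p]Tp_pS !mulBA -!(mulBA _ p p) p_idem.
  by rewrite !subrr.
by move/starB_faithful/subr0_eq.
Qed.

Lemma star_hom_at1 :
  (forall a b, T (a * b) = T a • T b) /\ (forall a, T (starA a) = starB (T a)).
Proof. by split=> [a b | a]; rewrite -Tp ?TpM -?star_Tp !Tp. Qed.

End StarHomAtOne.

(** * Unital Banach algebras *)

Lemma linear_normle_continuous (K : numFieldType) (V W : normedModType K)
    (f : V -> W) (k : K) : 0 <= k ->
  (forall a x y, f (a *: x + y) = a *: f x + f y) ->
  (forall x, `|f x| <= k * `|x|) -> continuous f.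
Proof.
move=> k0 f_linear f_bound.
pose F : {linear V -> W} := HB.pack f (GRing.isLinear.Build K V W *:%R f f_linear).
apply: (@bounded_linear_continuous _ _ _ F); apply/linear_boundedP.
near=> r => x; apply: le_trans (f_bound x) _; rewrite ler_wpM2r //.
by near: r; apply: nbhs_pinfty_ge; rewrite ger0_real.
Unshelve. all: by end_near. Qed.

Lemma closure_stable (T : topologicalType) (f : T -> T) (A : set T) :
  continuous f -> A `<=` f @^-1` closure A -> closure A `<=` f @^-1` closure A.
Proof.
move=> f_cont fA; rewrite [X in X `<=` _]closureE; apply: smallest_sub => //.
exact: preimage_closed (@closed_closure _ _).
Qed.

Section ComplexNormed.
Variable R : realType.
Local Notation C := (complex R).
Local Open Scope complex_scope.

Lemma ge0_complexE (z : C) : 0 <= z -> z = (complex.Re z)%:C.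
Proof. by case: z => a b; rewrite lecE /= => /andP[/eqP -> _]. Qed.

Lemma cvg_series_geometric_le (V : completeNormedModType C) (u : V ^nat) (c r : C) :
  0 <= r < 1 -> (forall k, `|u k| <= c * r ^+ k) -> cvgn (series u).
Proof.
move=> /andP[r0 r1] u_le.
have c0 : 0 <= c by have := le_trans (normr_ge0 _) (u_le 0%N); rewrite expr0 mulr1.
have Re_r0 : 0 <= complex.Re r by move: r0; rewrite lecE => /andP[].
have Re_r1 : complex.Re r < 1 by move: r1; rewrite ltcE => /andP[].
rewrite (ge0_complexE c0) (ge0_complexE r0) in u_le.
have : cauchy (series (geometric (complex.Re c) (complex.Re r)) @ \oo).
  apply/cauchy_cvgP/cvg_ex; exists (complex.Re c / (1 - complex.Re r)).
  by apply: cvg_geometric_series; rewrite ger0_norm.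
move=> /cauchy_seriesP geo_cauchy; apply/cauchy_cvgP/cauchy_seriesP => e e0.
have Re_e0 : 0 < complex.Re e by move: e0; rewrite ltcE => /andP[].
apply: filterS (geo_cauchy _ Re_e0) => n sum_lt.
rewrite (ge0_complexE (ltW e0)); apply: le_lt_trans (ler_norm_sum _ _ _) _.
apply: (@le_lt_trans _ _ (\sum_(n.1 <= k < n.2) geometric (complex.Re c) (complex.Re r) k)%:C).
  rewrite rmorph_sum; apply: ler_sum => k _.
  by rewrite /= rmorphM rmorphXn; exact: u_le.
by rewrite ltcR; apply: le_lt_trans (ler_norm _) sum_lt.
Qed.

End ComplexNormed.

Section BanachAlgebra.
Variable R : realType.
Local Notation C := (complex R).
Variables (V : completeNormedModType C) (mul : V -> V -> V) (one : V).
Hypotheses (mulA : forall x y z, mul x (mul y z) = mul (mul x y) z)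
  (mul_linearl : forall (a : C) x y z, mul (a *: x + y) z = a *: mul x z + mul y z)
  (mul_linearr : forall (a : C) x y z, mul z (a *: x + y) = a *: mul z x + mul z y)
  (one_unit : is_unit mul one)
  (mul_norm : forall x y, `|mul x y| <= `|x| * `|y|).

Let mul1v x : mul one x = x := (one_unit x).1.
Let mulv1 x : mul x one = x := (one_unit x).2.
Let mulDv x y z : mul (x + y) z = mul x z + mul y z :=
  semilinearD (sigma := id) erefl (fun a x y => mul_linearl a x y z) x y.
Let mulvD z x y : mul z (x + y) = mul z x + mul z y :=
  semilinearD (sigma := id) erefl (fun a x y => mul_linearr a x y z) x y.

(* The carrier of [banach_ring] is [V] and its product is [mul], so ring
   statements about it apply to [V] and [mul] up to conversion. *)
Definition banach_ring : pzRingType :=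
  HB.pack V (GRing.Zmodule_isPzRing.Build V mulA mul1v mulv1 mulDv mulvD).

Let mul0v x : mul 0 x = 0 := @mul0r banach_ring x.
Let mulv0 x : mul x 0 = 0 := @mulr0 banach_ring x.
Let mulBv x y z : mul (x - y) z = mul x z - mul y z := @mulrBl banach_ring z x y.
Let mulvB z x y : mul z (x - y) = mul z x - mul z y := @mulrBr banach_ring z x y.

Lemma mull_continuous c : continuous (mul c).
Proof.
apply: (linear_normle_continuous (normr_ge0 c)) => [a x y|x].
  exact: mul_linearr.
exact: mul_norm.
Qed.

Lemma mulr_continuous c : continuous (mul^~ c).
Proof.
apply: (linear_normle_continuous (normr_ge0 c)) => [a x y|x].
  exact: mul_linearl.
by rewrite mulrC; exact: mul_norm.
Qed.

(* Neumann series: [(1 - d)^-1 = \sum_k d^k]. *)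
Lemma invertible_one_sub d : `|d| < 1 -> invertible (one - d : banach_ring).
Proof.
move=> d_lt1; pose pw k := iter k (mul d) one.
have pwSr k : pw k.+1 = mul (pw k) d.
  elim: k => [|k IH]; first by rewrite /= mul1v mulv1.
  by rewrite -[pw k.+2]/(mul d (pw k.+1)) {1}IH mulA.
have series_cvg : cvgn (series pw).
  apply: (@cvg_series_geometric_le _ _ _ `|one| `|d|); first by rewrite normr_ge0.
  elim=> [|k IH]; first by rewrite expr0 mulr1.
  apply: le_trans (mul_norm _ _) _; rewrite exprS mulrCA.
  by apply: ler_wpM2l => //; exact: IH.
have seriesS k : series pw k.+1 = series pw k + pw k.
  by rewrite /series /= big_nat_recr.
have series0 : series pw 0 = 0 by rewrite /series /= big_geq.
have one_sub_pw : (fun k => one - pw k) @ \oo --> one.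
  rewrite -[X in _ --> X]subr0; apply: cvgB; first exact: cvg_cst.
  exact: cvg_series_cvg_0.
have inverse (f : V -> V) : continuous f ->
    (forall k, f (series pw k) = one - pw k) -> f (limn (series pw)) = one.
  move=> f_cont f_series.
  rewrite -(cvg_lim (@norm_hausdorff _ V) one_sub_pw) -(funext f_series).
  apply: esym; apply: (cvg_lim (@norm_hausdorff _ V)).
  by apply: continuous_cvg; [exact: f_cont | exact: series_cvg].
exists (limn (series pw)); split.
- apply: (inverse (mul (one - d))) => [|k]; first exact: mull_continuous.
  elim: k => [|k IH].
    by rewrite series0 mulv0 subrr.
  by rewrite seriesS mulvD IH mulBv mul1v addrA subrK.
- apply: (inverse (mul^~ (one - d))) => [|k]; first exact: mulr_continuous.
  elim: k => [|k IH].
    by rewrite series0 mul0v subrr.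
  by rewrite seriesS mulDv IH mulvB mulv1 -pwSr addrA subrK.
Qed.

Let mulZv (a : C) x y : mul (a *: x) y = a *: mul x y :=
  semilinearZ (sigma := id) erefl (fun b x' y' => mul_linearl b x' y' y) a x.
Let mulvZ (a : C) x y : mul x (a *: y) = a *: mul x y :=
  semilinearZ (sigma := id) erefl (fun b x' y' => mul_linearr b x' y' x) a y.

Lemma invertibleZ (a : C) (g : banach_ring) : a != 0 -> invertible g ->
  invertible (a *: (g : V) : banach_ring).
Proof.
move=> a0 [g' [gg' g'g]]; exists (a^-1 *: (g' : V) : banach_ring).
split.
  change (mul (a *: g) (a^-1 *: g') = one).
  by rewrite mulZv mulvZ scalerA mulfV // scale1r; exact: gg'.
change (mul (a^-1 *: g') (a *: g) = one).
by rewrite mulZv mulvZ scalerA mulVf // scale1r; exact: g'g.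
Qed.

Lemma banach_diff_invertible (b : banach_ring) :
  exists g c, [/\ invertible g, invertible c & b = g - c].
Proof.
pose l : C := `|b| + 1; pose d : V := - (l^-1 *: b).
have l_gt0 : 0 < l by rewrite ltr_wpDl.
have d_lt1 : `|d| < 1.
  rewrite normrN normrZ ger0_norm ?invr_ge0 ?ltW // mulrC ltr_pdivrMr //.
  by rewrite mul1r ltrDl.
exists (l *: (one - d : banach_ring)), (l *: (1 : banach_ring)); split.
- by apply: invertibleZ; [rewrite gt_eqF | exact: invertible_one_sub].
- by apply: invertibleZ; [rewrite gt_eqF | exists 1; rewrite mulr1].
- by rewrite -scalerBr addrAC subrr add0r opprK scalerA mulfV ?gt_eqF // scale1r.
Qed.

Lemma closed_ideal_closure (I : set V) : I 0 ->
    (forall x y, I x -> I y -> I (x + y)) -> (forall (a : C) x, I x -> I (a *: x)) ->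
    (forall x y, I y -> I (mul x y) /\ I (mul y x)) ->
  closed_ideal mul (closure I).
Proof.
move=> I0 ID IZ IM.
have stable f z : continuous f -> (forall x, I x -> I (f x)) ->
    closure I z -> closure I (f z).
  move=> f_cont f_I; apply: closure_stable => // x /f_I.
  exact: subset_closure.
have translate_cont u : continuous (+%R^~ u : V -> V).
  by move=> z; apply: continuousD => //; exact: cvg_cst.
split; first exact: subset_closure.
- move=> x y Ix Iy; rewrite addrC.
  have Iy_x : closure I `<=` (+%R^~ x) @^-1` closure I.
    apply: closure_stable => [|w Iw /=]; first exact: translate_cont.
    rewrite addrC.
    exact: (stable _ x (translate_cont w) (fun v Iv => ID v w Iv Iw) Ix).
  exact: Iy_x Iy.
- move=> a x; apply: stable => [|y]; [exact: scaler_continuous | exact: IZ].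
- move=> x y Iy; split.
    apply: (stable (mul x) y) Iy => [|w /(IM x)[]//]; exact: mull_continuous.
  apply: (stable (mul^~ x) y) Iy => [|w /(IM x)[]//]; exact: mulr_continuous.
- exact: closed_closure.
Qed.

Lemma closure_left_ideal_one (I : set V) : (forall x y, I y -> I (mul x y)) ->
  closure I one -> I one.
Proof.
move=> IM /(_ _ (nbhsx_ballx one 1 ltr01)) [y [Iy]].
rewrite -ball_normE /= => /invertible_one_sub.
rewrite opprB addrC subrK => -[w [_ wy]].
by rewrite -[one]/(1 : banach_ring) -wy; exact: IM.
Qed.

Lemma simple_defect_ideal1 (v v' : banach_ring) : simple_alg mul ->
  v' * v = 1 -> v * v' != 1 -> defect_ideal (1 : banach_ring).
Proof.
move=> simple v'v non_unitary; set I : set V := @defect_ideal banach_ring.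
have I_closed : closed_ideal mul (closure I).
  apply: closed_ideal_closure.
  - exact: defect_ideal0.
  - move=> x y; exact: (@defect_idealD banach_ring x y).
  - move=> a _ [w [w' [x [z [iso ->]]]]]; exists w, w', (a *: x), z; split=> //.
    change (a *: mul (mul x (defect w w')) z = mul (mul (a *: x) (defect w w')) z).
    by rewrite !mulZv.
  - by move=> x y Iy; split; [exact: defect_idealMl | exact: defect_idealMr].
case: (simple _ I_closed) => [I0 | IT].
  have : closure I (defect v v') by apply: subset_closure; exact: defect_ideal_defect v'v.
  by rewrite I0 /= => /eqP; rewrite subr_eq0 eq_sym (negbTE non_unitary).
by apply: closure_left_ideal_one => [x y|]; [exact: defect_idealMl | rewrite IT].
Qed.

End BanachAlgebra.

Lemma infinite_non_unitary_isometry (R : realType) (V : completeNormedModType (complex R))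
    (mul : V -> V -> V) (star : V -> V) (one : V) :
  infinite_alg mul star one -> exists v, mul (star v) v = one /\ mul v (star v) != one.
Proof.
move=> infinite; apply: contrapT => all_unitary; apply: infinite.
move=> q _ _ [v [vv vv']]; apply/eqP/negPn/negP => q_neq1.
by apply: all_unitary; exists v; rewrite vv'.
Qed.

Section CStarAlgebra.
Variable R : realType.
Variables (V : completeNormedModType (complex R)) (mul : V -> V -> V) (star : V -> V).
Hypothesis cstar : is_cstar_algebra mul star.

Lemma cstar_star_additive : zmod_morphism star.
Proof.
have [_ [_ [_ [star_semilinear _]]]] := cstar.
exact: (semilinear_zmod_morphism (conjC1 _) star_semilinear).
Qed.

Lemma cstar_mull_additive x : zmod_morphism (mul x).
Proof.
have [_ [_ [mul_linearr _]]] := cstar.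
by apply: linear_zmod_morphism => a y z; exact: mul_linearr.
Qed.

Lemma cstar_mulr_additive y : zmod_morphism (mul^~ y).
Proof.
have [_ [mul_linearl _]] := cstar.
by apply: linear_zmod_morphism => a x z; exact: mul_linearl.
Qed.

Lemma cstar_mul_star_eq0 x : mul x (star x) = 0 -> x = 0.
Proof.
have [_ [_ [_ [_ [starK [_ [_ cstar_id]]]]]]] := cstar.
move=> x_starx; have := cstar_id (star x); rewrite starK x_starx normr0.
move=> /esym/eqP; rewrite sqrf_eq0 normr_eq0 => /eqP star_x0.
by rewrite -[x]starK star_x0 (zmod_morphism0 cstar_star_additive).
Qed.

End CStarAlgebra.

Unset Implicit Arguments.
Set Strict Implicit.

Theorem theorem2p8 (R : realType)
  (VA VB : completeNormedModType (complex R))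
  (mulA : VA -> VA -> VA) (starA : VA -> VA)
  (mulB : VB -> VB -> VB) (starB : VB -> VB)
  (hA : is_cstar_algebra mulA starA) (hB : is_cstar_algebra mulB starB)
  (one : VA) (hone : is_unit mulA one)
  (hsimple : simple_alg mulA) (hinf : infinite_alg mulA starA one)
  (T : VA -> VB) (hT : is_linear_map T) :
  star_hom mulA starA mulB starB T <-> star_hom_at mulA starA mulB starB T one.
Proof.
split=> [[_ [T_mul T_star]] | [T_at1_l T_at1_r]].
  by split=> a b <-; rewrite T_mul T_star.
have [mulA_assoc [mulA_linl [mulA_linr [_ [starAK [starAM [mulA_norm _]]]]]]] := hA.
have [mulB_assoc [_ [_ [_ [starBK [starBM _]]]]]] := hB.
pose A := banach_ring mulA_assoc mulA_linl mulA_linr hone.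
have [v [v_isometry non_unitary]] := infinite_non_unitary_isometry hinf.
have [s [s' [t [t' orth]]]] := orthogonal_isometries_of_defect_ideal1
  (simple_defect_ideal1 mulA_norm hsimple v_isometry non_unitary).
have [T_mul T_star] := @star_hom_at1 A _ starA mulB starB T
  (cstar_star_additive hA) starAK starAM
  mulB_assoc (cstar_mulr_additive hB) (cstar_mull_additive hB)
  (cstar_star_additive hB) starBK starBM (cstar_mul_star_eq0 hB)
  (@lmod_two_torsionfree _ VB) (banach_diff_invertible mulA_norm) _ _ _ _ orth
  (linear_zmod_morphism hT) (fun a b ab => (T_at1_l a b ab).2)
  (fun c d cd => (T_at1_r c d cd).2).
by split.
Qed.
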